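(* Let $F \subseteq \mathsf{L}_\mu$ and let $\mu\phi \in \Pi(F)$. Then there exist a formula $\mu\psi \in F$, a set of variables $V$ and a substitution $\theta\colon V \to \Pi(F)$ such that $\phi = \psi[\theta]$.
   Context: Formulas of the modal $\mu$-calculus ($\mathsf{L}_\mu$) are built from a countable set $\mathsf{Var}$ of variables and negated variables $\neg x$ ($x\in\mathsf{Var}$), together called literals, by the grammar: literals, $\square\alpha$, $\diamond\alpha$, $\bigwedge\Gamma$, $\bigvee\Gamma$ for finite sets $\Gamma$ of formulas, and $\mu\phi$, $\nu\phi$ for predicates $\phi=\lambda x.\alpha$ where $\alpha$ is $x$-positive (i.e. $\neg x$ does not occur in $\alpha$). Formulas and predicates are identified up to renaming of bound variables. Negation is the involution $\alpha\mapsto\alpha^\bot$ with $x^\bot=\neg x$, $(\neg x)^\bot=x$, $(\bigwedge\Gamma)^\bot=\bigvee\{\gamma^\bot:\gamma\in\Gamma\}$, $(\square\alpha)^\bot=\diamond\alpha^\bot$, $(\mu\lambda x.\alpha)^\bot=\nu\lambda x.(\alpha[x:=\neg x])^\bot$, and duals. A substitution is a map $\theta\colon V\to\mathsf{L}_\mu$ with $V\subseteq\mathsf{Var}$; $\eta[\theta]$ is the simultaneous capture-avoiding substitution of $\theta(x)$ for free occurrences of $x$ in $\eta$, where an occurrence $\neg x$ with $x\in V$ is replaced by $\theta(x)^\bot$; for predicates $(\lambda y.\alpha)[\theta]=\lambda y.\alpha[\theta]$ with $y$ fresh. A formula is $V$-positive if $\neg x$ does not occur in it for every $x\in V$. For $F\subseteq\mathsf{L}_\mu$,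 $\Pi(F)$ is the smallest set of formulas such that: (1) $F$ and all literals belong to $\Pi(F)$; (2) if $\Gamma\subseteq\Pi(F)$ finite then $\bigvee\Gamma,\bigwedge\Gamma\in\Pi(F)$; (3) if $\alpha\in\Pi(F)$ then $\square\alpha,\diamond\alpha\in\Pi(F)$; (4) if $\phi=\lambda x.\alpha$ with $\alpha\in\Pi(F)$ then $\nu\phi\in\Pi(F)$; (5) if $\alpha\in\Pi(F)$ is $V$-positive and $\theta\colon V\to\Pi(F)$, then $\alpha[\theta]\in\Pi(F)$. *)

From mathcomp Require Import all_boot.
From Stdlib Require List.

Set Implicit Arguments.
Unset Strict Implicit.
Unset Printing Implicit Defensive.

(* Formulas of the modal mu-calculus, in locally-nameless style:
   free variables are named by nat (the countable set Var), bound
   variables are de Bruijn indices [BVar n].  Since a predicate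
   lambda x.alpha requires alpha to be x-positive, bound variables only
   ever occur positively, so no negated bound-variable constructor is
   needed.  Finite sets Gamma are represented by lists, and formulas
   are compared with [feq] below, which identifies lists that denote
   the same set.  Renaming of bound variables is built in (de Bruijn). *)
Inductive form : Type :=
  | FVar  of nat
  | FNVar of nat
  | BVar  of nat
  | Box   of form
  | Dia   of form
  | And   of list form
  | Or    of list form
  | Mu    of form
  | Nu    of form.

(* local closedness: all de Bruijn indices are bound; [lc_at 0 f] means
   f is a genuine formula of L_mu *)
Fixpoint lc_at (k : nat) (f : form) : bool :=
  match f with
  | FVar _ | FNVar _ => true
  | BVar n => n < k
  | Box a | Dia a => lc_at k a
  | And l | Or l => all (lc_at k) l
  | Mu a | Nu a => lc_at k.+1 a
  end.

Fixpoint occurs_neg (x : nat) (f : form) : bool :=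
  match f with
  | FVar _ | BVar _ => false
  | FNVar y => y == x
  | Box a | Dia a => occurs_neg x a
  | And l | Or l => has (occurs_neg x) l
  | Mu a | Nu a => occurs_neg x a
  end.

(* negation (the involution alpha |-> alpha^bot).  Bound variables are
   unchanged: (mu lambda x.a)^bot = nu lambda x.(a[x:=~x])^bot. *)
Fixpoint neg (f : form) : form :=
  match f with
  | FVar x => FNVar x
  | FNVar x => FVar x
  | BVar n => BVar n
  | Box a => Dia (neg a)
  | Dia a => Box (neg a)
  | And l => Or (map neg l)
  | Or l => And (map neg l)
  | Mu a => Nu (neg a)
  | Nu a => Mu (neg a)
  end.

(* a substitution theta : V -> L_mu is a partial map nat -> option form,
   with V its domain.  alpha[theta] replaces x by theta x and ~x by
   (theta x)^bot for x in V.  Bound variables are de Bruijn indices, so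
   substitution under binders is capture-avoiding (values are closed). *)
Fixpoint subst (th : nat -> option form) (f : form) : form :=
  match f with
  | FVar x => if th x is Some g then g else FVar x
  | FNVar x => if th x is Some g then neg g else FNVar x
  | BVar n => BVar n
  | Box a => Box (subst th a)
  | Dia a => Dia (subst th a)
  | And l => And (map (subst th) l)
  | Or l => Or (map (subst th) l)
  | Mu a => Mu (subst th a)
  | Nu a => Nu (subst th a)
  end.

(* abstraction: [close x k a] replaces the free variable x by the bound
   index k (at depth); Nu (close x 0 a) represents nu (lambda x. a). *)
Fixpoint close (x k : nat) (f : form) : form :=
  match f with
  | FVar y => if y == x then BVar k else FVar y
  | FNVar y => FNVar y
  | BVar n => BVar n
  | Box a => Box (close x k a)
  | Dia a => Dia (close x k a)
  | And l => And (map (close x k) l)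
  | Or l => Or (map (close x k) l)
  | Mu a => Mu (close x k.+1 a)
  | Nu a => Nu (close x k.+1 a)
  end.

(* identity of formulas: finite sets Gamma are equal iff they have the
   same (identified) elements *)
Inductive feq : form -> form -> Prop :=
  | feq_var x : feq (FVar x) (FVar x)
  | feq_nvar x : feq (FNVar x) (FNVar x)
  | feq_bvar n : feq (BVar n) (BVar n)
  | feq_box a b : feq a b -> feq (Box a) (Box b)
  | feq_dia a b : feq a b -> feq (Dia a) (Dia b)
  | feq_and l1 l2 :
      (forall a, List.In a l1 -> exists b, List.In b l2 /\ feq a b) ->
      (forall b, List.In b l2 -> exists a, List.In a l1 /\ feq a b) ->
      feq (And l1) (And l2)
  | feq_or l1 l2 :
      (forall a, List.In a l1 -> exists b, List.In b l2 /\ feq a b) ->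
      (forall b, List.In b l2 -> exists a, List.In a l1 /\ feq a b) ->
      feq (Or l1) (Or l2)
  | feq_mu a b : feq a b -> feq (Mu a) (Mu b)
  | feq_nu a b : feq a b -> feq (Nu a) (Nu b).

(* Pi(F): the smallest set of formulas (closed under identification)
   satisfying clauses (1)-(5). *)
Inductive Pi (F : form -> Prop) : form -> Prop :=
  | Pi_F a : F a -> Pi F a
  | Pi_var x : Pi F (FVar x)
  | Pi_nvar x : Pi F (FNVar x)
  | Pi_and l : (forall g, List.In g l -> Pi F g) -> Pi F (And l)
  | Pi_or l : (forall g, List.In g l -> Pi F g) -> Pi F (Or l)
  | Pi_box a : Pi F a -> Pi F (Box a)
  | Pi_dia a : Pi F a -> Pi F (Dia a)
  | Pi_nu x a : Pi F a -> ~~ occurs_neg x a -> Pi F (Nu (close x 0 a))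
  | Pi_subst a (th : nat -> option form) :
      Pi F a ->
      (forall x, th x <> None -> ~~ occurs_neg x a) ->
      (forall x g, th x = Some g -> Pi F g) ->
      Pi F (subst th a)
  | Pi_feq a b : Pi F a -> feq a b -> Pi F b.

From mathcomp Require Import all_boot.
From Stdlib Require List.

Set Implicit Arguments.
Unset Strict Implicit.
Unset Printing Implicit Defensive.

(* Induct on a derivation of [Pi F (Mu phi)], maintaining that [phi] is
   (up to [feq]) an instance [psi[th]] of the body of some [Mu psi] in [F],
   where [th] takes values in [Pi F] and is positive on [psi].  Only clause
   (5) can produce a [Mu]: either [Mu phi] is the value [th x] substituted
   for a variable (the induction hypothesis on [th]), or it is
   [(Mu a)[th]] and the two substitutions compose.  Positivity is what makes
   the composite values [g[th]] legitimate instances of clause (5) again. *)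

Definition form_nested_ind (P : form -> Prop)
  (hv : forall x, P (FVar x)) (hn : forall x, P (FNVar x))
  (hb : forall n, P (BVar n))
  (hbox : forall a, P a -> P (Box a)) (hdia : forall a, P a -> P (Dia a))
  (hand : forall l, (forall g, List.In g l -> P g) -> P (And l))
  (hor : forall l, (forall g, List.In g l -> P g) -> P (Or l))
  (hmu : forall a, P a -> P (Mu a)) (hnu : forall a, P a -> P (Nu a)) :
  forall f, P f :=
  fix go f :=
    let all_in l : forall g, List.In g l -> P g :=
      (fix go_list (l : list form) : forall g, List.In g l -> P g :=
         match l with
         | nil => fun g H => False_ind _ H
         | cons h t => fun g H =>
             match H with
             | or_introl e => eq_ind h P (go h) g e
             | or_intror H' => go_list t g H'
             end
         end) l in
    match f with
    | FVar x => hv x | FNVar x => hn x | BVar n => hb n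
    | Box a => hbox a (go a) | Dia a => hdia a (go a)
    | And l => hand l (all_in l) | Or l => hor l (all_in l)
    | Mu a => hmu a (go a) | Nu a => hnu a (go a)
    end.

Lemma hasP_In (T : Type) (p : pred T) (l : list T) :
  reflect (exists2 g, List.In g l & p g) (has p l).
Proof.
elim: l => [|h t IH] /=; first by right; case.
apply: (iffP orP) => [[ph | /IH [g tg pg]] | [g [<- | tg] pg]].
- by exists h; first left.
- by exists g; first right.
- by left.
- by right; apply/IH; exists g.
Qed.

Lemma eq_map_In (T U : Type) (f g : T -> U) (l : list T) :
  (forall x, List.In x l -> f x = g x) -> map f l = map g l.
Proof. exact: List.map_ext_in. Qed.

Lemma feq_refl a : feq a a.
Proof.
elim/form_nested_ind: a => *; constructor=> // g gl; exists g; split; auto.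
Qed.

Lemma feq_sym a b : feq a b -> feq b a.
Proof.
elim/form_nested_ind: a b => [x|x|n|a IH|a IH|l IH|l IH|a IH|a IH] b ab;
  inversion ab as [| | | | |? l' ll' l'l|? l' ll' l'l| |]; subst; constructor;
  auto.
1,3: by move=> g /l'l [h [hl hg]]; exists h; split; auto.
all: by move=> h hl; case: (ll' h hl) => g [gl' hg]; exists g; split; auto.
Qed.

Lemma feq_trans a b c : feq a b -> feq b c -> feq a c.
Proof.
elim/form_nested_ind: a b c => [x|x|n|a IH|a IH|l IH|l IH|a IH|a IH] b c ab bc;
  inversion ab as [| | | | |? l' ll' l'l|? l' ll' l'l| |]; subst;
  inversion bc as [| | | | |? l'' l'l'' l''l'|? l'' l'l'' l''l'| |]; subst;
  constructor; eauto.
1,3: move=> g gl; case: (ll' g gl) => h [hl' gh];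
  case: (l'l'' h hl') => k [kl'' hk]; exists k; split; eauto.
all: move=> k kl''; case: (l''l' k kl'') => h [hl' hk];
  case: (l'l h hl') => g [gl gh]; exists g; split; eauto.
Qed.

Lemma feq_subst th a b : feq a b -> feq (subst th a) (subst th b).
Proof.
elim/form_nested_ind: a b => [x|x|n|a IH|a IH|l IH|l IH|a IH|a IH] b ab;
  inversion ab as [| | | | |? l' ll' l'l|? l' ll' l'l| |]; subst;
  try exact: feq_refl; constructor; auto.
1,3: move=> f /List.in_map_iff [g [<- gl]]; case: (ll' g gl) => k [kl' gk].
3,4: move=> f /List.in_map_iff [g [<- gl']]; case: (l'l g gl') => k [kl kg].
all: by exists (subst th k); split; [exact: (List.in_map (subst th)) | exact: IH].
Qed.

Lemma feq_occurs_neg y a b : feq a b -> occurs_neg y a = occurs_neg y b.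
Proof.
elim/form_nested_ind: a b => [x|x|n|a IH|a IH|l IH|l IH|a IH|a IH] b ab;
  inversion ab as [| | | | |? l' ll' l'l|? l' ll' l'l| |]; subst => //=; auto.
all: apply/hasP_In/hasP_In => [[g gl og] | [k kl' ok]].
1,3: by case: (ll' g gl) => k [kl' gk]; exists k; rewrite // -(IH g gl k gk).
all: by case: (l'l k kl') => g [gl gk]; exists g; rewrite // (IH g gl k gk).
Qed.

Lemma negK : involutive neg.
Proof.
elim/form_nested_ind => //= [a ->|a ->|l IH|l IH|a ->|a ->] //;
  by rewrite -map_comp (@eq_map_In _ _ _ id) ?map_id.
Qed.

Lemma subst_none f : subst (fun _ => None) f = f.
Proof.
elim/form_nested_ind: f => //= [a ->|a ->|l IH|l IH|a ->|a ->] //;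
  by rewrite (@eq_map_In _ _ _ id) ?map_id.
Qed.

Lemma subst_neg th f : subst th (neg f) = neg (subst th f).
Proof.
elim/form_nested_ind: f => /= [x|x|n|a ->|a ->|l IH|l IH|a ->|a ->] //.
- by case: (th x).
- by case: (th x) => // g; rewrite negK.
- by rewrite -!map_comp (eq_map_In IH).
- by rewrite -!map_comp (eq_map_In IH).
Qed.

Fixpoint occurs_pos (x : nat) (f : form) : bool :=
  match f with
  | FVar y => y == x
  | FNVar _ | BVar _ => false
  | Box a | Dia a => occurs_pos x a
  | And l | Or l => has (occurs_pos x) l
  | Mu a | Nu a => occurs_pos x a
  end.

Definition subst_comp (th th' : nat -> option form) (x : nat) : option form :=
  if th' x is Some g then Some (subst th g) else th x.

Lemma subst_subst th th' f : subst th (subst th' f) = subst (subst_comp th th') f.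
Proof.
rewrite /subst_comp.
elim/form_nested_ind: f => /= [x|x|n|a ->|a ->|l IH|l IH|a ->|a ->] //.
- by case: (th' x).
- by case: (th' x) => // g; rewrite subst_neg.
- by rewrite -map_comp (eq_map_In IH).
- by rewrite -map_comp (eq_map_In IH).
Qed.

Lemma eq_in_subst th1 th2 f :
  (forall x, occurs_pos x f || occurs_neg x f -> th1 x = th2 x) ->
  subst th1 f = subst th2 f.
Proof.
elim/form_nested_ind: f => /= [x|x|n|a IH|a IH|l IH|l IH|a IH|a IH] eq12;
  rewrite ?eq12 ?eqxx ?orbT ?IH //.
all: congr (_ _); apply: eq_map_In => g gl; apply: IH => // x /orP occ.
all: apply: eq12; apply/orP.
all: by case: occ => occ; [left | right]; apply/hasP_In; exists g.
Qed.

Lemma occurs_neg_subst_pos th x g y f :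
  th x = Some g -> occurs_pos x f -> occurs_neg y g -> occurs_neg y (subst th f).
Proof.
move=> thx + yg; elim/form_nested_ind: f => //= [z /eqP ->|l IH|l IH];
  rewrite ?thx // => /hasP_In [h hl xh]; apply/hasP_In.
all: by exists (subst th h); [exact: (List.in_map (subst th)) | exact: IH].
Qed.

Lemma occurs_neg_subst_free th x f :
  th x = None -> occurs_neg x f -> occurs_neg x (subst th f).
Proof.
move=> thx; elim/form_nested_ind: f => //= [z /eqP ->|l IH|l IH];
  rewrite ?thx /= ?eqxx // => /hasP_In [h hl xh]; apply/hasP_In.
all: by exists (subst th h); [exact: (List.in_map (subst th)) | exact: IH].
Qed.

Definition positive_subst (th : nat -> option form) (f : form) : Prop :=
  forall x, th x <> None -> ~~ occurs_neg x f.

Lemma positive_substP th f x :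
  positive_subst th f -> occurs_neg x f -> th x = None.
Proof.
move=> pos xneg; case thx: (th x) => [g|] //.
suff: ~~ occurs_neg x f by rewrite xneg.
by apply: pos; rewrite thx.
Qed.

Definition mu_instance (F : form -> Prop) (phi : form) : Prop :=
  exists psi th, [/\ F (Mu psi), forall x g, th x = Some g -> Pi F g,
                     positive_subst th psi & feq phi (subst th psi)].

(* The composite is kept only on variables occurring in [psi]: elsewhere
   [g[th]] need not be in [Pi F], as [th] need not be positive on [g]. *)
Definition subst_comp_on (psi : form) (th th' : nat -> option form) (x : nat) :=
  if th' x is Some g then (if occurs_pos x psi then Some (subst th g) else None)
  else th x.

Section MuInstance.

Variable F : form -> Prop.

Lemma mu_instance_of_F phi : F (Mu phi) -> mu_instance F phi.
Proof.
by exists phi, (fun _ => None); split; rewrite ?subst_none //; apply: feq_refl.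
Qed.

Lemma mu_instance_feq a b : mu_instance F a -> feq a b -> mu_instance F b.
Proof.
move=> [psi [th [Fpsi thPi pos a_eq]]] ab; exists psi, th; split=> //.
exact: feq_trans (feq_sym ab) a_eq.
Qed.

Lemma mu_instance_subst a th :
  mu_instance F a -> positive_subst th a ->
  (forall x g, th x = Some g -> Pi F g) -> mu_instance F (subst th a).
Proof.
move=> [psi [th' [Fpsi th'Pi th'pos a_eq]]] thpos thPi.
have neg_back y : occurs_neg y (subst th' psi) -> occurs_neg y a.
  by rewrite (feq_occurs_neg y a_eq).
exists psi, (subst_comp_on psi th th'); rewrite /subst_comp_on; split=> //.
- move=> x g; case thx: (th' x) => [h|]; last exact: thPi.
  case: ifP => // xpos [<-]; apply: Pi_subst; [exact: th'Pi thx | | exact: thPi].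
  move=> y /thpos; apply: contra => yneg; apply: neg_back.
  exact: occurs_neg_subst_pos thx xpos yneg.
- move=> x; case thx: (th' x) => [h|].
    by case: ifP => // _ _; apply: th'pos; rewrite thx.
  move=> /thpos; apply: contra => xneg; apply: neg_back.
  exact: occurs_neg_subst_free.
- rewrite (@eq_in_subst _ (subst_comp th th') psi); last first.
    move=> x /orP[xpos | xneg]; rewrite /subst_comp.
      by case: (th' x) => // g; rewrite xpos.
    by rewrite (positive_substP th'pos xneg).
  by rewrite -subst_subst; apply: feq_subst.
Qed.

Lemma Pi_Mu_instance phi : Pi F (Mu phi) -> mu_instance F phi.
Proof.
move mu_phi: (Mu phi) => f Pf; elim: Pf phi mu_phi => //.
- by move=> a Fa phi mu_phi; subst a; apply: mu_instance_of_F.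
- move=> a th _ IHa apos thPi IHth phi.
  case: a IHa apos => [x|x|n|a|a|l|l|a|a] IHa apos //=.
  + by case thx: (th x) => [g|] // g_mu; apply: IHth thx _ g_mu.
  + by rewrite (positive_substP apos (eqxx x)).
  + by move=> [->]; apply: mu_instance_subst (IHa a erefl) apos thPi.
- move=> a b _ IHa ab phi b_mu; subst b.
  inversion ab as [| | | | | | | a' phi' a'phi |]; subst.
  exact: mu_instance_feq (IHa a' erefl) a'phi.
Qed.

End MuInstance.

Theorem lemma2p1 (F : form -> Prop) (phi : form) :
  (forall f, F f -> lc_at 0 f) ->
  Pi F (Mu phi) ->
  exists (psi : form) (th : nat -> option form),
    F (Mu psi) /\
    (forall x g, th x = Some g -> Pi F g) /\
    feq phi (subst th psi).
Proof.
move=> _ /Pi_Mu_instance [psi [th [Fpsi thPi _ phi_eq]]].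
by exists psi, th.
Qed.
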